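(* Let $(Y,\lambda)\in\{-1,1\}\times\{-1,1\}^m$ follow the Ising model $$P(Y,\lambda)=\frac1Z\exp\Big(\theta_Y Y+\sum_k\theta_k\lambda_kY+\sum_{(k,l)\in E_\lambda}\theta_{kl}\lambda_k\lambda_l\Big),$$ where $E_\lambda$ is a set of unordered pairs of distinct sources, each source in at most one pair. Let $(i,j)\in E_\lambda$. Then $$\varepsilon_{ij}:=\mathbb E[\lambda_i\lambda_j]-\mathbb E[\lambda_iY]\mathbb E[\lambda_jY]=\Delta_{ij}-\Delta_ia_j'-\Delta_ja_i'-\Delta_i\Delta_j,$$ where $$z_{ij}=\sum_{s_i,s_j\in\{\pm1\}}\exp(s_i\theta_i+s_j\theta_j+s_is_j\theta_{ij}),\qquad z'_{ij}=\sum_{s_i,s_j\in\{\pm1\}}\exp(s_i\theta_i+s_j\theta_j),$$ $$\Delta_i=\frac{2}{z_{ij}z'_{ij}}(e^{\theta_{ij}}-e^{-\theta_{ij}})(e^{2\theta_j}-e^{-2\theta_j}),\qquad \Delta_j=\frac{2}{z_{ij}z'_{ij}}(e^{\theta_{ij}}-e^{-\theta_{ij}})(e^{2\theta_i}-e^{-2\theta_i}),$$ $$\Delta_{ij}=\frac{2}{z_{ij}z'_{ij}}(e^{\theta_{ij}}-e^{-\theta_{ij}})(e^{2\theta_i}+e^{-2\theta_i}+e^{2\theta_j}+e^{-2\theta_j}),$$ $$a_i'=\frac{2}{z'_{ij}}e^{\theta_i}(e^{\theta_j}+e^{-\theta_j})-1,\qquad a_j'=\frac{2}{z'_{ij}}e^{\theta_j}(e^{\theta_i}+e^{-\theta_i})-1.$$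 Moreover, $\varepsilon_{ij}\in(0,1)$ if $\theta_i,\theta_j,\theta_{ij}>0$.
   Context: $Z$ is the normalizing constant. *)

From mathcomp Require Import all_boot all_order all_algebra.
From mathcomp Require Import all_classical all_reals all_analysis.
Set Implicit Arguments. Unset Strict Implicit. Unset Printing Implicit Defensive.
Import Order.TTheory GRing.Theory Num.Theory.
Local Open Scope ring_scope.

Definition spin {R : pzRingType} (b : bool) : R := if b then 1 else -1.

(* a configuration: (Y, lambda) with lambda : 'I_m -> {-1,1} *)
Definition config (m : nat) := (bool * {ffun 'I_m -> bool})%type.

Definition valid_pairs (m : nat) (E : {set {set 'I_m}}) : Prop :=
  (forall e, e \in E -> #|e| = 2%N) /\ finset.trivIset E.

Definition ising_energy {R : realType} (m : nat) (E : {set {set 'I_m}})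
  (thY : R) (th : 'I_m -> R) (thE : {set 'I_m} -> R) (c : config m) : R :=
  thY * spin c.1 + \sum_(k < m) th k * spin (c.2 k) * spin c.1
  + \sum_(e in E) thE e * \prod_(k in e) spin (c.2 k).

Definition ising_Z {R : realType} m E thY th thE : R :=
  \sum_(c : config m) expR (@ising_energy R m E thY th thE c).

Definition ising_P {R : realType} m E thY th thE (c : config m) : R :=
  expR (@ising_energy R m E thY th thE c) / ising_Z E thY th thE.

Definition ising_E {R : realType} m E thY th thE (f : config m -> R) : R :=
  \sum_(c : config m) ising_P E thY th thE c * f c.

Section Quantities.
Variables (R : realType) (ti tj tij : R).
Definition z_ij : R :=
  \sum_(si : bool) \sum_(sj : bool)
     expR (spin si * ti + spin sj * tj + spin si * spin sj * tij).
Definition z'_ij : R :=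
  \sum_(si : bool) \sum_(sj : bool) expR (spin si * ti + spin sj * tj).
Definition Delta_i : R :=
  2 / (z_ij * z'_ij) * (expR tij - expR (- tij)) * (expR (2 * tj) - expR (- (2 * tj))).
Definition Delta_j : R :=
  2 / (z_ij * z'_ij) * (expR tij - expR (- tij)) * (expR (2 * ti) - expR (- (2 * ti))).
Definition Delta_ij : R :=
  2 / (z_ij * z'_ij) * (expR tij - expR (- tij))
   * (expR (2 * ti) + expR (- (2 * ti)) + expR (2 * tj) + expR (- (2 * tj))).
Definition a'_i : R := 2 / z'_ij * expR ti * (expR tj + expR (- tj)) - 1.
Definition a'_j : R := 2 / z'_ij * expR tj * (expR ti + expR (- ti)) - 1.
End Quantities.

From mathcomp Require Import all_boot all_order all_algebra.
From mathcomp Require Import all_classical all_reals all_analysis.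
From mathcomp Require Import ring lra.
Import Order.TTheory GRing.Theory Num.Theory.
Local Open Scope ring_scope.
Set Implicit Arguments. Unset Strict Implicit. Unset Printing Implicit Defensive.

(* Put s_k := [lambda_k == Y] for k in {i, j}.  Then lambda_i Y = s_i, lambda_j Y = s_j,
   lambda_i lambda_j = s_i s_j, and the energy is the sum of a term not involving s_i, s_j
   (the pair {i, j} meets no other pair of E) and the energy of the two-spin model
   s theta_i + t theta_j + s t theta_ij.  Summing out everything else, means of functions of
   (s_i, s_j) are means for the 2x2 table p_st = exp(s theta_i + t theta_j + s t theta_ij),
   whose covariance is 4 (p_++ p_-- - p_+- p_-+) / z_ij^2 with
   p_++ p_-- - p_+- p_-+ = e^(2 theta_ij) - e^(-2 theta_ij).  The closed form is then a
   rational identity in e^theta_i, e^theta_j, e^theta_ij, and eps < 1 because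
   4 (ad - bc) < 4 ad <= (a + d)^2 < z^2. *)

Lemma spin_eqb (R : pzRingType) (a b : bool) : spin (a == b) = spin a * spin b :> R.
Proof. by case: a; case: b; rewrite /spin /= ?mul1r ?mulrNN ?mulr1. Qed.

Lemma spin_mulss (R : pzRingType) (b : bool) : spin b * spin b = 1 :> R.
Proof. by case: b; rewrite /spin ?mulrNN ?mulr1. Qed.

Section SpinPair.
Variables (R : realFieldType) (p : bool -> bool -> R).
Hypothesis p_gt0 : forall s t, 0 < p s t.

Definition pair_mean (g : bool -> bool -> R) : R :=
  (\sum_s \sum_t p s t * g s t) / \sum_s \sum_t p s t.

Definition pair_cov : R :=
  pair_mean (fun s t => spin s * spin t)
    - pair_mean (fun s _ => spin s) * pair_mean (fun _ t => spin t).

Lemma pair_mass_gt0 : 0 < \sum_s \sum_t p s t.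
Proof. by rewrite !big_bool /= !addr_gt0. Qed.

Lemma pair_covE :
  pair_cov = 4 * (p true true * p false false - p true false * p false true)
               / (\sum_s \sum_t p s t) ^+ 2.
Proof.
move: (lt0r_neq0 pair_mass_gt0); rewrite /pair_cov /pair_mean !big_bool /spin /=.
move: (p true true) (p true false) (p false true) (p false false) => a b c d Z0.
by field.
Qed.

Lemma pair_cov_bounds :
  p true false * p false true < p true true * p false false -> 0 < pair_cov < 1.
Proof.
move=> det_gt0; have Z_gt0 := pair_mass_gt0.
rewrite pair_covE divr_gt0 ?exprn_gt0 ?mulr_gt0 ?subr_gt0 //=.
rewrite ltr_pdivrMr ?exprn_gt0 // mul1r.
move: (p_gt0 true true) (p_gt0 true false) (p_gt0 false true) (p_gt0 false false).
rewrite !big_bool /=.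
move: (p true true) (p true false) (p false true) (p false false) => a b c d a0 b0 c0 d0.
have := sqr_ge0 (a - d); have := mulr_gt0 b0 c0.
have := mulr_gt0 (addr_gt0 a0 d0) (addr_gt0 b0 c0); nra.
Qed.

End SpinPair.

Section Flip2.
Variables (m : nat) (i j : 'I_m).

Definition flip2 (a b : bool) (c : config m) : config m :=
  (c.1, [ffun k => if k == i then c.2 k (+) a
                   else if k == j then c.2 k (+) b else c.2 k]).

Lemma flip2K a b : involutive (flip2 a b).
Proof.
move=> [y l]; congr (_, _); apply/ffunP => k; rewrite !ffunE.
by case: eqP => _; [|case: eqP => _]; rewrite ?addbK.
Qed.

Lemma flip2_i a b c : (flip2 a b c).2 i = c.2 i (+) a.
Proof. by rewrite ffunE eqxx. Qed.

Lemma flip2_j a b c : i != j -> (flip2 a b c).2 j = c.2 j (+) b.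
Proof. by move=> ij; rewrite ffunE eq_sym (negPf ij) eqxx. Qed.

Lemma flip2_other a b c k : k != i -> k != j -> (flip2 a b c).2 k = c.2 k.
Proof. by move=> ki kj; rewrite ffunE (negPf ki) (negPf kj). Qed.

Lemma sum_flip2 (V : nmodType) (F : config m -> V) : i != j ->
  \sum_c F c = \sum_(c : config m | ~~ c.2 i && ~~ c.2 j) \sum_a \sum_b F (flip2 a b c).
Proof.
move=> ij.
transitivity (\sum_(c : config m) \sum_a \sum_b
                (if (c.2 i == a) && (c.2 j == b) then F c else 0)).
  apply: eq_bigr => c _; rewrite !big_bool /=.
  by case: (c.2 i); case: (c.2 j); rewrite /= ?addr0 ?add0r.
rewrite exchange_big [RHS]exchange_big; apply: eq_bigr => a _ /=.
rewrite exchange_big [RHS]exchange_big; apply: eq_bigr => b _ /=.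
rewrite -big_mkcond (reindex_inj (inv_inj (flip2K a b))) /=.
apply: eq_bigl => c; rewrite flip2_i flip2_j //.
by case: (c.2 i); case: (c.2 j); case: a; case: b.
Qed.

End Flip2.

Definition pair_energy (R : pzRingType) (ti tj tij : R) (s t : bool) : R :=
  spin s * ti + spin t * tj + spin s * spin t * tij.

Lemma sum_bool2_eqb (V : nmodType) (y : bool) (F : bool -> bool -> V) :
  \sum_a \sum_b F (a == y) (b == y) = \sum_s \sum_t F s t.
Proof.
by case: y; rewrite !big_bool ?eqb_id ?eqbF_neg //= addrC; congr (_ + _); rewrite addrC.
Qed.

Section IsingPair.
Variables (R : realType) (m : nat) (E : {set {set 'I_m}}).
Variables (thY : R) (th : 'I_m -> R) (thE : {set 'I_m} -> R) (i j : 'I_m).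
Hypotheses (E_valid : valid_pairs E) (Eij : [set i; j] \in E).

Lemma pair_neq : i != j.
Proof. by have := E_valid.1 _ Eij; rewrite cards2; case: (i != j). Qed.

Definition energy_off_pair (c : config m) : R :=
  thY * spin c.1 + \sum_(k < m | (k != i) && (k != j)) th k * spin (c.2 k) * spin c.1
  + \sum_(e in E | e != [set i; j]) thE e * \prod_(k in e) spin (c.2 k).

Let pair_weight s t := expR (pair_energy (th i) (th j) (thE [set i; j]) s t).

Lemma ising_energy_split c :
  ising_energy E thY th thE c
  = energy_off_pair c
    + pair_energy (th i) (th j) (thE [set i; j]) (c.2 i == c.1) (c.2 j == c.1).
Proof.
have ij := pair_neq.
rewrite /ising_energy /energy_off_pair /pair_energy (bigD1 i) //=.
rewrite (bigD1 j) /=; last by rewrite eq_sym.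
rewrite (bigD1 [set i; j]) //= big_setU1 ?big_set1 /=; last by rewrite inE.
rewrite !spin_eqb.
move: (\sum_(_ < m | _) _) (\sum_(_ in E | _) _) (spin (c.2 i)) (spin (c.2 j)) => S1 S2 si sj.
by case: (c.1); rewrite /spin; ring.
Qed.

Lemma energy_off_pair_flip2 a b c : energy_off_pair (flip2 i j a b c) = energy_off_pair c.
Proof.
have [_ /finset.trivIsetP E_disj] := E_valid.
rewrite /energy_off_pair; congr (_ + _ + _).
  by apply: eq_bigr => k /andP [ki kj]; rewrite flip2_other.
apply: eq_bigr => e /andP [eE ne]; congr (_ * _); apply: eq_bigr => k ke.
have /disjointFl dis := E_disj _ _ eE Eij ne.
rewrite flip2_other //; apply: contraTneq ke => ->; rewrite dis // !inE eqxx ?orbT //.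
Qed.

Let off_pair_mass :=
  \sum_(c : config m | ~~ c.2 i && ~~ c.2 j) expR (energy_off_pair c).

Lemma off_pair_mass_gt0 : 0 < off_pair_mass.
Proof.
rewrite /off_pair_mass (bigD1 (true, [ffun => false])) /= ?ffunE //.
by rewrite ltr_pwDl ?expR_gt0 // sumr_ge0 // => c _; rewrite ltW ?expR_gt0.
Qed.

Lemma sum_ising_weight_pair (g : bool -> bool -> R) :
  \sum_c expR (ising_energy E thY th thE c) * g (c.2 i == c.1) (c.2 j == c.1)
  = off_pair_mass * \sum_s \sum_t pair_weight s t * g s t.
Proof.
rewrite (sum_flip2 _ pair_neq) /off_pair_mass mulr_suml.
apply: eq_bigr => c /andP [/negPf ci /negPf cj].
rewrite -(sum_bool2_eqb c.1 (fun s t => pair_weight s t * g s t)) big_distrr.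
apply: eq_bigr => a _; rewrite big_distrr; apply: eq_bigr => b _.
rewrite ising_energy_split energy_off_pair_flip2 -[(flip2 i j a b c).1]/(c.1).
by rewrite flip2_i flip2_j ?pair_neq // ci cj expRD -mulrA.
Qed.

Lemma ising_ZE : ising_Z E thY th thE = off_pair_mass * \sum_s \sum_t pair_weight s t.
Proof.
rewrite /ising_Z; under eq_bigr do rewrite -[expR _]mulr1.
rewrite (sum_ising_weight_pair (fun _ _ => 1)).
by under eq_bigr do under eq_bigr do rewrite mulr1.
Qed.

Lemma ising_E_pair (f : config m -> R) (g : bool -> bool -> R) :
  (forall c, f c = g (c.2 i == c.1) (c.2 j == c.1)) ->
  ising_E E thY th thE f = pair_mean pair_weight g.
Proof.
move=> fg; rewrite /ising_E /ising_P.
transitivity ((\sum_c expR (ising_energy E thY th thE c)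
                      * g (c.2 i == c.1) (c.2 j == c.1)) / ising_Z E thY th thE).
  by rewrite mulr_suml; apply: eq_bigr => c _; rewrite fg mulrAC.
rewrite sum_ising_weight_pair ising_ZE /pair_mean invfM mulrACA.
by rewrite mulfV ?mul1r // gt_eqF // off_pair_mass_gt0.
Qed.

Lemma ising_spin_cov :
  ising_E E thY th thE (fun c => spin (c.2 i) * spin (c.2 j))
  - ising_E E thY th thE (fun c => spin (c.2 i) * spin c.1)
    * ising_E E thY th thE (fun c => spin (c.2 j) * spin c.1)
  = pair_cov pair_weight.
Proof.
rewrite (ising_E_pair (g := fun s t => spin s * spin t)) => [|c].
  by rewrite (ising_E_pair (g := fun s _ => spin s))
             ?(ising_E_pair (g := fun _ t => spin t)) // => c; rewrite spin_eqb.
by rewrite !spin_eqb mulrACA spin_mulss mulr1.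
Qed.

End IsingPair.

Section ClosedForm.
Variables (R : realType) (ti tj tij : R).

Lemma pair_energy_det :
  expR (pair_energy ti tj tij true true) * expR (pair_energy ti tj tij false false)
  - expR (pair_energy ti tj tij true false) * expR (pair_energy ti tj tij false true)
  = expR (2 * tij) - expR (- (2 * tij)).
Proof. by rewrite -!expRD /pair_energy /spin; congr (expR _ - expR _); ring. Qed.

Lemma pair_cov_closed_form :
  4 * (expR (2 * tij) - expR (- (2 * tij))) / z_ij ti tj tij ^+ 2
  = Delta_ij ti tj tij - Delta_i ti tj tij * a'_j ti tj
    - Delta_j ti tj tij * a'_i ti tj - Delta_i ti tj tij * Delta_j ti tj tij.
Proof.
rewrite /Delta_ij /Delta_i /Delta_j /a'_i /a'_j /z'_ij /z_ij !big_bool /spin /=.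
rewrite ?(mul1r, mulN1r, mulrNN) !expRD !expRN ?(opprK, mul1r) !expRM_natl.
move: (expR_gt0 ti) (expR_gt0 tj) (expR_gt0 tij).
move: (expR ti) (expR tj) (expR tij) => x y w x0 y0 w0.
by field; rewrite !gt_eqF // !(addr_gt0, mulr_gt0, ltr01).
Qed.

End ClosedForm.

Theorem lemma5 (R : realType) (m : nat) (E : {set {set 'I_m}})
  (thY : R) (th : 'I_m -> R) (thE : {set 'I_m} -> R) (i j : 'I_m) :
  valid_pairs E -> [set i; j] \in E ->
  let Ex := ising_E E thY th thE in
  let eps := Ex (fun c => spin (c.2 i) * spin (c.2 j))
             - Ex (fun c => spin (c.2 i) * spin c.1)
               * Ex (fun c => spin (c.2 j) * spin c.1) in
  let ti := th i in let tj := th j in let tij := thE [set i; j] in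
  eps = Delta_ij ti tj tij - Delta_i ti tj tij * a'_j ti tj
        - Delta_j ti tj tij * a'_i ti tj - Delta_i ti tj tij * Delta_j ti tj tij
  /\ (0 < ti -> 0 < tj -> 0 < tij -> 0 < eps < 1).
Proof.
move=> E_valid Eij Ex eps ti tj tij.
have p_gt0 s t : 0 < expR (pair_energy ti tj tij s t) by exact: expR_gt0.
have eps_cov : eps = pair_cov (fun s t => expR (pair_energy ti tj tij s t)).
  exact: ising_spin_cov.
split; first by rewrite eps_cov pair_covE // pair_energy_det pair_cov_closed_form.
(* only [0 < tij] is needed *)
move=> _ _ tij_gt0; rewrite eps_cov pair_cov_bounds // -subr_gt0 pair_energy_det.
by rewrite subr_gt0 ltr_expR gtrN ?mulr_gt0.
Qed.
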